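(* Let $n\ge2$ and let $L_1,\dots,L_n$ be closed line segments parallel to the $y$-axis, where $L_i$ has end-points $A_i(x_i,a_i)$ and $B_i(x_i,b_i)$ with $a_i\le b_i$ for all $i$, and $x_1<x_2<\dots<x_n$. Let $s<t$ be indices such that the slope of the line $A_sB_t$ is the minimum of the slopes of the lines $A_iB_j$ over all $1\le i<j\le n$, and let $u<v$ be indices such that the slope of the line $B_uA_v$ is the maximum of the slopes of the lines $B_iA_j$ over all $1\le i<j\le n$. Assume that at least one straight line intersects all the segments $L_1,\dots,L_n$. Then, among all straight lines intersecting all the segments $L_1,\dots,L_n$, the line $A_sB_t$ has the maximum slope and the line $B_uA_v$ has the minimum slope. *)

From mathcomp Require Import all_boot all_order all_algebra.
Set Implicit Arguments. Unset Strict Implicit. Unset Printing Implicit Defensive.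
Import Order.TTheory GRing.Theory Num.Theory.
Local Open Scope ring_scope.

Definition slope (R : realFieldType) (P Q : R * R) : R :=
  (Q.2 - P.2) / (Q.1 - P.1).

(* A non-vertical line y = m x + c is encoded by the pair (m, c); m is its
   slope.  The line through P and Q (P.1 <> Q.1): *)
Definition line_through (R : realFieldType) (P Q : R * R) : R * R :=
  (slope P Q, P.2 - slope P Q * P.1).

Definition meets_seg (R : realFieldType) (l : R * R) (x0 a0 b0 : R) : Prop :=
  a0 <= l.1 * x0 + l.2 <= b0.

Definition stabs_all (R : realFieldType) (n : nat) (x a b : 'I_n -> R)
  (l : R * R) : Prop :=
  forall i : 'I_n, meets_seg l (x i) (a i) (b i).

From mathcomp Require Import all_boot all_order all_algebra.
From mathcomp Require Import ring lra.
Import Order.TTheory GRing.Theory Num.Theory.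
Local Open Scope ring_scope.

(* A stabbing line l passes above A_s and below B_t, hence is at most as steep
   as A_s B_t.  Conversely A_s B_t stabs every L_i: to the right of L_s it stays
   below B_i since A_s B_i is at least as steep, and to the left of L_s it stays
   below l, which is less steep and passes above A_s; symmetrically for the lower
   end-points around L_t.  Reflecting y -> -y swaps the roles of the A_i and B_i
   and turns the claim about B_u A_v into the one about A_s B_t. *)

Section Slopes.
Context {R : realFieldType}.
Implicit Types (P Q l : R * R) (m w y z : R).

Lemma le_slope m x0 y0 x1 y1 : x0 < x1 ->
  (m <= slope (x0, y0) (x1, y1)) = (m * (x1 - x0) <= y1 - y0).
Proof. by move=> lt01; rewrite /slope /= ler_pdivlMr ?subr_gt0. Qed.

Lemma slopeK P Q : P.1 != Q.1 -> slope P Q * (Q.1 - P.1) = Q.2 - P.2.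
Proof. by move=> neqPQ; rewrite /slope divfK // subr_eq0 eq_sym. Qed.

Lemma line_throughE P Q z :
  (line_through P Q).1 * z + (line_through P Q).2 = P.2 + slope P Q * (z - P.1).
Proof. by rewrite /line_through /=; ring. Qed.

Lemma line_throughEr P Q z : P.1 != Q.1 ->
  (line_through P Q).1 * z + (line_through P Q).2 = Q.2 + slope P Q * (z - Q.1).
Proof.
move=> /slopeK slPQ; rewrite line_throughE.
have -> : Q.2 = P.2 + slope P Q * (Q.1 - P.1) by rewrite slPQ; ring.
ring.
Qed.

Lemma slope_le_meets l x0 a0 b0 x1 a1 b1 : x0 < x1 ->
  meets_seg l x0 a0 b0 -> meets_seg l x1 a1 b1 -> l.1 <= slope (x0, a0) (x1, b1).
Proof. by move=> lt01 /andP[a0l _] /andP[_ lb1]; rewrite le_slope //; nra. Qed.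

Lemma line_below_left l m w y z : l.1 <= m -> z <= w ->
  y <= l.1 * w + l.2 -> y + m * (z - w) <= l.1 * z + l.2.
Proof. by move=> klem lezw yl; nra. Qed.

Lemma line_above_right l m w y z : l.1 <= m -> w <= z ->
  l.1 * w + l.2 <= y -> l.1 * z + l.2 <= y + m * (z - w).
Proof. by move=> klem lewz ly; nra. Qed.

Lemma slope_opp x0 y0 x1 y1 :
  slope (x0, - y0) (x1, - y1) = - slope (x0, y0) (x1, y1).
Proof. by rewrite /slope /= -opprD mulNr. Qed.

Lemma line_through_opp x0 y0 x1 y1 :
  line_through (x0, - y0) (x1, - y1) =
  (- (line_through (x0, y0) (x1, y1)).1, - (line_through (x0, y0) (x1, y1)).2).
Proof. by rewrite /line_through slope_opp /=; congr (_, _); ring. Qed.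

Lemma meets_seg_opp l x0 a0 b0 :
  meets_seg (- l.1, - l.2) x0 (- b0) (- a0) <-> meets_seg l x0 a0 b0.
Proof. by rewrite /meets_seg /= mulNr -opprD !lerN2 andbC. Qed.

End Slopes.

Section MaxSlope.
Variables (R : realFieldType) (n : nat) (x a b : 'I_n -> R) (s t : 'I_n).
Hypothesis x_incr : forall i j : 'I_n, (i < j)%N -> x i < x j.
Hypothesis lt_st : (s < t)%N.
Hypothesis slope_min : forall i j : 'I_n, (i < j)%N ->
  slope (x s, a s) (x t, b t) <= slope (x i, a i) (x j, b j).

Let A i := (x i, a i).
Let B i := (x i, b i).
Let m := slope (A s) (B t).

Lemma stabs_slope_le l : stabs_all x a b l -> l.1 <= m.
Proof. by move=> stab; apply: slope_le_meets; [exact: x_incr | exact: stab ..]. Qed.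

Lemma line_through_stabs l :
  stabs_all x a b l -> stabs_all x a b (line_through (A s) (B t)).
Proof.
move=> stab i; have klem := stabs_slope_le l stab.
have /andP[ai_l l_bi] := stab i; have /andP[as_l l_bs] := stab s.
have /andP[at_l l_bt] := stab t.
have neq_st : (A s).1 != (B t).1 by rewrite lt_eqF ?x_incr.
apply/andP; split.
- rewrite line_throughEr //=.
  case: (ltngtP i t) => [lt_it|lt_ti|/val_inj ->].
  + have := slope_min _ _ lt_it; rewrite le_slope ?x_incr //= => mle.
    by rewrite mulrBr in mle *; lra.
  + apply: le_trans ai_l _; apply: line_above_right => //.
    by rewrite ltW ?x_incr.
  + by rewrite subrr mulr0 addr0 (le_trans at_l).
- rewrite line_throughE /=.
  case: (ltngtP i s) => [lt_is|lt_si|/val_inj ->].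
  + apply: le_trans l_bi; apply: line_below_left => //.
    by rewrite ltW ?x_incr.
  + have := slope_min _ _ lt_si; rewrite le_slope ?x_incr //= => mle.
    by rewrite mulrBr in mle *; lra.
  + by rewrite subrr mulr0 addr0 (le_trans as_l).
Qed.

End MaxSlope.

Lemma stabbing_max_slope (R : realFieldType) (n : nat) (x a b : 'I_n -> R)
    (s t : 'I_n) :
  (forall i j : 'I_n, (i < j)%N -> x i < x j) -> (s < t)%N ->
  (forall i j : 'I_n, (i < j)%N ->
     slope (x s, a s) (x t, b t) <= slope (x i, a i) (x j, b j)) ->
  (exists l : R * R, stabs_all x a b l) ->
  stabs_all x a b (line_through (x s, a s) (x t, b t)) /\
  forall l : R * R, stabs_all x a b l -> l.1 <= slope (x s, a s) (x t, b t).
Proof.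
move=> x_incr lt_st slope_min [l stab]; split.
- exact: line_through_stabs stab.
- by move=> l'; apply: stabs_slope_le.
Qed.

Lemma stabs_all_opp (R : realFieldType) (n : nat) (x a b : 'I_n -> R) l :
  stabs_all x (fun i => - b i) (fun i => - a i) (- l.1, - l.2) <->
  stabs_all x a b l.
Proof. by split=> stab i; apply/meets_seg_opp; exact: stab. Qed.

Lemma stabbing_min_slope (R : realFieldType) (n : nat) (x a b : 'I_n -> R)
    (u v : 'I_n) :
  (forall i j : 'I_n, (i < j)%N -> x i < x j) -> (u < v)%N ->
  (forall i j : 'I_n, (i < j)%N ->
     slope (x i, b i) (x j, a j) <= slope (x u, b u) (x v, a v)) ->
  (exists l : R * R, stabs_all x a b l) ->
  stabs_all x a b (line_through (x u, b u) (x v, a v)) /\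
  forall l : R * R, stabs_all x a b l -> slope (x u, b u) (x v, a v) <= l.1.
Proof.
move=> x_incr lt_uv slope_max [l stab].
have slope_min (i j : 'I_n) : (i < j)%N ->
    slope (x u, - b u) (x v, - a v) <= slope (x i, - b i) (x j, - a j).
  by move=> lt_ij; rewrite !slope_opp lerN2 slope_max.
have stab_opp : stabs_all x (fun i => - b i) (fun i => - a i) (- l.1, - l.2).
  exact/stabs_all_opp.
have [] := @stabbing_max_slope R n x _ _ u v x_incr lt_uv slope_min
  (ex_intro _ _ stab_opp).
rewrite line_through_opp slope_opp => /stabs_all_opp stab_line bound.
split=> // l' stab_l'; rewrite -lerN2.
by apply: (bound (- l'.1, - l'.2)); apply/stabs_all_opp.
Qed.

Theorem corollary2 (R : realFieldType) (n : nat) (x a b : 'I_n -> R)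
  (s t u v : 'I_n) :
  (2 <= n)%N ->
  (forall i, a i <= b i) ->
  (forall i j : 'I_n, (i < j)%N -> x i < x j) ->
  (s < t)%N ->
  (forall i j : 'I_n, (i < j)%N ->
     slope (x s, a s) (x t, b t) <= slope (x i, a i) (x j, b j)) ->
  (u < v)%N ->
  (forall i j : 'I_n, (i < j)%N ->
     slope (x i, b i) (x j, a j) <= slope (x u, b u) (x v, a v)) ->
  (exists l : R * R, stabs_all x a b l) ->
  (stabs_all x a b (line_through (x s, a s) (x t, b t)) /\
   forall l : R * R, stabs_all x a b l -> l.1 <= slope (x s, a s) (x t, b t))
  /\
  (stabs_all x a b (line_through (x u, b u) (x v, a v)) /\
   forall l : R * R, stabs_all x a b l -> slope (x u, b u) (x v, a v) <= l.1).
Proof.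
move=> _ _ x_incr lt_st slope_min lt_uv slope_max stabbed.
by split; [exact: stabbing_max_slope | exact: stabbing_min_slope].
Qed.
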